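(* Let $p,q\in[0,1]$ be real numbers and $R\in\{\mathrm{ML},\mathrm{wML},\mathrm C,\mathrm S\}$. Then every recursive temporal selection process belongs to $\mathscr S^{p,q}_{\mathscr F_R}$.
   Context: $\mathbb N_0=\{0,1,2,\dots\}$. $\mathbb S=\bigcup_{n\in\mathbb N_0}\{0,1\}^n$ is the set of situations, $\square$ the empty sequence, $|s|$ the length, $sx$ concatenation. For $r\in[0,1]$ and $f:\{0,1\}\to\mathbb R$, $E_r(f)=rf(1)+(1-r)f(0)$. A real process is $F:\mathbb S\to\mathbb R$, $\Delta F(s)$ is $x\mapsto F(sx)-F(s)$. A test process is a non-negative real process with $F(\square)=1$. A multiplier process $D$ assigns to each $s$ a function $D(s):\{0,1\}\to[0,\infty)$ and generates the test process $F(\square)=1$, $F(sx)=F(s)D(s)(x)$. Computability: maps from countable effectively encoded domains ($\mathbb N_0$, $\mathbb S$, products with $\{0,1\}$, $\mathbb N_0$) to $\mathbb N_0$, $\mathbb Q$ or $\{0,1\}$ are recursive if Turing-computable; a real map $r$ is lower semicomputable if $r(d)=\lim_nq(d,n)$ for a recursive rational $q$ non-decreasing in $n$. $\mathscr F_{\mathrm{ML}}$: lower semicomputable test processes; $\mathscr F_{\mathrm{wML}}$: test processes generated by lower semicomputable multiplier processes; $\mathscr F_{\mathrm C}=\mathscr F_{\mathrm S}$: positive, rational-valued, recursive test processes. A selection process is a map $S:\mathbb S\to\{0,1\}$; temporal if $S(s)$ depends only on $|s|$ (written $S(n)$). For a real process $F$ and $r\in[0,1]$, $S^r_F$ is the temporal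 selection process with $S^r_F(n)=1$ if $E_r(\Delta F(s))>0$ for some $s$ with $|s|=n$, and $0$ otherwise. For a set $\mathscr F$ of real processes, $\mathscr S^{p,q}_{\mathscr F}=\{S^r_F:F\in\mathscr F,\ r\in\{p,q\}\}$. *)

From Stdlib Require Import Reals List Arith ClassicalEpsilon.
Import ListNotations.
Open Scope R_scope.

Inductive prf : Type :=
| PZero : prf
| PSucc : prf
| PProj : nat -> prf               (* i-th argument (0-based) *)
| PComp : prf -> list prf -> prf
| PRec  : prf -> prf -> prf        (* primitive recursion on first argument *)
| PMu   : prf -> prf.              (* unbounded minimisation on first argument *)

Inductive eval : prf -> list nat -> nat -> Prop :=
| ev_zero v : eval PZero v 0
| ev_succ x v : eval PSucc (x :: v) (S x)
| ev_proj i v : (i < length v)%nat -> eval (PProj i) v (nth i v 0%nat)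
| ev_comp f gs v ws y : evals gs v ws -> eval f ws y -> eval (PComp f gs) v y
| ev_rec0 f g v y : eval f v y -> eval (PRec f g) (0%nat :: v) y
| ev_recS f g n v z y :
    eval (PRec f g) (n :: v) z -> eval g (n :: z :: v) y ->
    eval (PRec f g) (S n :: v) y
| ev_mu f v n :
    eval f (n :: v) 0 ->
    (forall m, (m < n)%nat -> exists k, eval f (m :: v) (S k)) ->
    eval (PMu f) v n
with evals : list prf -> list nat -> list nat -> Prop :=
| evs_nil v : evals [] v []
| evs_cons g gs v w ws : eval g v w -> evals gs v ws -> evals (g :: gs) v (w :: ws).

(* s ++ [x] is the concatenation sx.  Bijective encoding:              *)
(*   code [] = 0,   code (s ++ [x]) = 2 * code s + 1 + x.              *)

Definition situation := list bool.

Definition code (s : situation) : nat :=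
  fold_left (fun acc (b : bool) => (2 * acc + 1 + Nat.b2n b)%nat) s 0%nat.

(* Recursive maps (Turing computable = mu-recursive) on the encoded domains *)

Definition recursive_S (f : situation -> nat) : Prop :=
  exists t, forall s, eval t [code s] (f s).

Definition recursive_SN (f : situation -> nat -> nat) : Prop :=
  exists t, forall s n, eval t [code s; n] (f s n).

Definition recursive_SBN (f : situation -> bool -> nat -> nat) : Prop :=
  exists t, forall s x n, eval t [code s; Nat.b2n x; n] (f s x n).

(* Rationals represented as (a - b) / (c + 1) with a b c natural numbers *)
Definition ratR (a b c : nat) : R := (INR a - INR b) / (INR c + 1).

Definition recursive_rat_S (F : situation -> R) : Prop :=
  exists a b c : situation -> nat,
    recursive_S a /\ recursive_S b /\ recursive_S c /\
    forall s, F s = ratR (a s) (b s) (c s).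

Definition lower_semicomputable_S (F : situation -> R) : Prop :=
  exists a b c : situation -> nat -> nat,
    recursive_SN a /\ recursive_SN b /\ recursive_SN c /\
    (forall s n, ratR (a s n) (b s n) (c s n) <= ratR (a s (S n)) (b s (S n)) (c s (S n))) /\
    (forall s, Un_cv (fun n => ratR (a s n) (b s n) (c s n)) (F s)).

Definition lower_semicomputable_SB (D : situation -> bool -> R) : Prop :=
  exists a b c : situation -> bool -> nat -> nat,
    recursive_SBN a /\ recursive_SBN b /\ recursive_SBN c /\
    (forall s x n, ratR (a s x n) (b s x n) (c s x n)
                   <= ratR (a s x (S n)) (b s x (S n)) (c s x (S n))) /\
    (forall s x, Un_cv (fun n => ratR (a s x n) (b s x n) (c s x n)) (D s x)).

Definition real_process := situation -> R.

Definition E (r : R) (f : bool -> R) : R := r * f true + (1 - r) * f false.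

Definition Delta (F : real_process) (s : situation) : bool -> R :=
  fun x => F (s ++ [x]) - F s.

Definition test_process (F : real_process) : Prop :=
  (forall s, 0 <= F s) /\ F [] = 1.

Definition multiplier_process (D : situation -> bool -> R) : Prop :=
  forall s x, 0 <= D s x.

Definition generated_by (D : situation -> bool -> R) (F : real_process) : Prop :=
  F [] = 1 /\ forall s x, F (s ++ [x]) = F s * D s x.

Definition F_ML (F : real_process) : Prop :=
  test_process F /\ lower_semicomputable_S F.

Definition F_wML (F : real_process) : Prop :=
  exists D, multiplier_process D /\ lower_semicomputable_SB D /\ generated_by D F.

Definition F_C (F : real_process) : Prop :=
  test_process F /\ (forall s, 0 < F s) /\ recursive_rat_S F.

Definition F_S (F : real_process) : Prop := F_C F.

Inductive randomness := ML | wML | Cr | Sr.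

Definition F_of (Rk : randomness) : real_process -> Prop :=
  match Rk with
  | ML => F_ML
  | wML => F_wML
  | Cr => F_C
  | Sr => F_S
  end.

Definition selection_process := situation -> bool.

Definition temporal (Sel : selection_process) : Prop :=
  forall s t, length s = length t -> Sel s = Sel t.

Definition recursive_selection (Sel : selection_process) : Prop :=
  recursive_S (fun s => Nat.b2n (Sel s)).

Definition sel_cond (r : R) (F : real_process) (n : nat) : Prop :=
  exists s, length s = n /\ E r (Delta F s) > 0.

Definition S_rF (r : R) (F : real_process) : selection_process :=
  fun s => if excluded_middle_informative (sel_cond r F (length s)) then true else false.

Definition S_pq (p q : R) (FF : real_process -> Prop) (Sel : selection_process) : Prop :=
  exists F r, FF F /\ (r = p \/ r = q) /\ Sel = S_rF r F.

(* A recursive temporal selection process [Sel] is realised by a process whose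
   increments after [s] are all positive when [Sel s] holds and all non-positive
   otherwise; then [E_r (Delta F s) > 0] holds exactly at the selected [s], for
   every [r] in [0, 1].

   For the rational processes take [G s = 2 - w s] on selected and [G s = 2 + w s]
   on unselected situations, where [w s = 1 / (code s + 1)], and normalise by
   [G []]. Since [w] shrinks at every step,
   both children of a selected [s] lie above [G s = 2 - w s] and both children
   of an unselected [s] lie below [G s = 2 + w s]. The process is rational
   with recursive numerator and denominator, and a recursive rational process is
   trivially lower semicomputable. For the multiplicative class use the
   multipliers [D s x = 2] on selected and [1] on unselected situations. *)

From Pilot Require Import Defs.
From Stdlib Require Import Reals.
From Stdlib Require Import List Arith Lia Lra FunctionalExtensionality.
Import ListNotations.
Open Scope R_scope.

Lemma eval_proj0 x v : eval (PProj 0) (x :: v) x.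
Proof. apply (ev_proj 0 (x :: v)); simpl; lia. Qed.

Lemma eval_comp1 f g v w y : eval g v w -> eval f [w] y -> eval (PComp f [g]) v y.
Proof. intros Hg Hf; eapply ev_comp; [|exact Hf]. now repeat constructor. Qed.

Lemma eval_comp2 f g h v w u y :
  eval g v w -> eval h v u -> eval f [w; u] y -> eval (PComp f [g; h]) v y.
Proof. intros Hg Hh Hf; eapply ev_comp; [|exact Hf]. now repeat constructor. Qed.

Definition add_prf : prf := PRec (PProj 0) (PComp PSucc [PProj 1]).

Lemma eval_add_prf n m : eval add_prf [n; m] (n + m)%nat.
Proof.
  induction n as [|n IH].
  - apply ev_rec0, eval_proj0.
  - eapply ev_recS; [exact IH|].
    apply eval_comp1 with (w := (n + m)%nat); [|constructor].
    apply (ev_proj 1 [n; (n + m)%nat; m]); simpl; lia.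
Qed.

Fixpoint const_prf (k : nat) : prf :=
  match k with 0 => PZero | S k' => PComp PSucc [const_prf k'] end.

Lemma eval_const_prf k v : eval (const_prf k) v k.
Proof.
  induction k as [|k IH]; simpl; [constructor|].
  eapply eval_comp1; [exact IH|constructor].
Qed.

Lemma code_snoc s x : code (s ++ [x]) = (2 * code s + 1 + Nat.b2n x)%nat.
Proof. unfold code; now rewrite fold_left_app. Qed.

Lemma recursive_S_code : recursive_S code.
Proof. exists (PProj 0); intro s; apply eval_proj0. Qed.

Lemma recursive_S_const k : recursive_S (fun _ => k).
Proof. exists (const_prf k); intro s; apply eval_const_prf. Qed.

Lemma recursive_S_add f g :
  recursive_S f -> recursive_S g -> recursive_S (fun s => f s + g s)%nat.
Proof.
  intros [tf Hf] [tg Hg]; exists (PComp add_prf [tf; tg]); intro s.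
  eapply eval_comp2; [apply Hf|apply Hg|apply eval_add_prf].
Qed.

Lemma recursive_S_mull k f : recursive_S f -> recursive_S (fun s => k * f s)%nat.
Proof.
  intro Hf; induction k as [|k IH]; [exact (recursive_S_const 0)|].
  exact (recursive_S_add f (fun s => k * f s)%nat Hf IH).
Qed.

Lemma recursive_SN_of_S f : recursive_S f -> recursive_SN (fun s _ => f s).
Proof.
  intros [t Ht]; exists (PComp t [PProj 0]); intros s n.
  eapply eval_comp1; [apply eval_proj0|apply Ht].
Qed.

Lemma recursive_SBN_of_S f : recursive_S f -> recursive_SBN (fun s _ _ => f s).
Proof.
  intros [t Ht]; exists (PComp t [PProj 0]); intros s x n.
  eapply eval_comp1; [apply eval_proj0|apply Ht].
Qed.

Lemma Un_cv_const c : Un_cv (fun _ => c) c.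
Proof. intros eps Heps; exists 0%nat; intros; rewrite R_dist_eq; lra. Qed.

Lemma recursive_rat_lower_semicomputable F :
  recursive_rat_S F -> lower_semicomputable_S F.
Proof.
  intros (a & b & c & Ha & Hb & Hc & HF).
  exists (fun s _ => a s), (fun s _ => b s), (fun s _ => c s).
  repeat split; try apply recursive_SN_of_S; auto.
  - intros; apply Rle_refl.
  - intro s; rewrite HF; apply Un_cv_const.
Qed.

Lemma ratR_nat n : ratR n 0 0 = INR n.
Proof. unfold ratR; simpl; field. Qed.

Lemma recursive_lower_semicomputable_SB f :
  recursive_S f -> lower_semicomputable_SB (fun s _ => INR (f s)).
Proof.
  intro Hf; exists (fun s _ _ => f s), (fun _ _ _ => 0%nat), (fun _ _ _ => 0%nat).
  repeat split; try apply recursive_SBN_of_S; try apply recursive_S_const; auto.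
  - intros; apply Rle_refl.
  - intros s x; rewrite <- ratR_nat; apply Un_cv_const.
Qed.

Lemma F_C_F_ML F : F_C F -> F_ML F.
Proof.
  intros (HF & _ & Hrat); split; [exact HF|].
  now apply recursive_rat_lower_semicomputable.
Qed.

Lemma E_gt0 r f : 0 <= r <= 1 -> f true > 0 -> f false > 0 -> E r f > 0.
Proof. intros Hr H1 H0; unfold E; destruct (Req_dec r 0); subst; nra. Qed.

Lemma E_le0 r f : 0 <= r <= 1 -> f true <= 0 -> f false <= 0 -> E r f <= 0.
Proof. intros Hr H1 H0; unfold E; nra. Qed.

Lemma temporal_eq_S_rF (Sel : selection_process) (F : real_process) r :
  temporal Sel -> 0 <= r <= 1 ->
  (forall s x, Sel s = true -> Defs.Delta F s x > 0) ->
  (forall s x, Sel s = false -> Defs.Delta F s x <= 0) ->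
  Sel = S_rF r F.
Proof.
  intros Htemp Hr Hup Hdown; apply functional_extensionality; intro s.
  unfold S_rF; destruct (ClassicalEpsilon.excluded_middle_informative _)
    as [[s' [Hlen HE]] | Hnot].
  - rewrite (Htemp s s' (eq_sym Hlen)).
    destruct (Sel s') eqn:Hs'; [reflexivity|].
    pose proof (E_le0 r (Defs.Delta F s') Hr (Hdown s' true Hs') (Hdown s' false Hs')).
    lra.
  - destruct (Sel s) eqn:Hs; [|reflexivity].
    exfalso; apply Hnot; exists s; split; [reflexivity|].
    apply E_gt0; auto.
Qed.

Section RationalProcess.

Variable Sel : selection_process.

Definition weight (s : situation) : R := / (INR (code s) + 1).

Definition ramp (s : situation) : R :=
  if Sel s then 2 - weight s else 2 + weight s.

Definition ramp_process (s : situation) : R := ramp s / ramp [].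

Lemma weight_pos s : 0 < weight s.
Proof. pose proof (pos_INR (code s)); unfold weight; apply Rinv_0_lt_compat; lra. Qed.

Lemma weight_le1 s : weight s <= 1.
Proof.
  pose proof (pos_INR (code s)); unfold weight; rewrite <- Rinv_1.
  apply Rinv_le_contravar; lra.
Qed.

Lemma weight_snoc_lt s x : weight (s ++ [x]) < weight s.
Proof.
  pose proof (pos_INR (code s)); pose proof (pos_INR (code (s ++ [x]))).
  unfold weight; apply Rinv_lt_contravar; [nra|].
  apply Rplus_lt_compat_r, lt_INR; rewrite code_snoc; lia.
Qed.

Lemma ramp_bounds s : 2 - weight s <= ramp s <= 2 + weight s.
Proof. pose proof (weight_pos s); unfold ramp; destruct (Sel s); lra. Qed.

Lemma ramp_pos s : 0 < ramp s.
Proof. pose proof (ramp_bounds s); pose proof (weight_le1 s); lra. Qed.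

Lemma Delta_ramp_pos s x : Sel s = true -> Defs.Delta ramp s x > 0.
Proof.
  intro Hs; unfold Defs.Delta; pose proof (ramp_bounds (s ++ [x])).
  pose proof (weight_snoc_lt s x); unfold ramp at 2; rewrite Hs; lra.
Qed.

Lemma Delta_ramp_neg s x : Sel s = false -> Defs.Delta ramp s x < 0.
Proof.
  intro Hs; unfold Defs.Delta; pose proof (ramp_bounds (s ++ [x])).
  pose proof (weight_snoc_lt s x); unfold ramp at 2; rewrite Hs; lra.
Qed.

Lemma Delta_ramp_process s x :
  Defs.Delta ramp_process s x = Defs.Delta ramp s x / ramp [].
Proof. unfold Defs.Delta, ramp_process; field; apply Rgt_not_eq, ramp_pos. Qed.

Lemma ramp_process_test : test_process ramp_process.
Proof.
  pose proof (ramp_pos []); split.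
  - intro s; unfold ramp_process; pose proof (ramp_pos s).
    apply Rlt_le, Rdiv_lt_0_compat; lra.
  - unfold ramp_process; field; lra.
Qed.

Definition ramp_scale : nat := if Sel [] then 1%nat else 3%nat.

Lemma ramp_nil : ramp [] = INR ramp_scale.
Proof.
  unfold ramp, weight, ramp_scale; simpl; destruct (Sel []); simpl; field.
Qed.

Lemma ramp_process_ratR s :
  ramp_process s =
  ratR (2 * code s + 3) (2 * Nat.b2n (Sel s)) (ramp_scale * code s + (ramp_scale - 1)).
Proof.
  pose proof (pos_INR (code s)).
  assert (Hden : INR (ramp_scale * code s + (ramp_scale - 1)) + 1
                 = INR ramp_scale * (INR (code s) + 1)).
  { rewrite <- !S_INR, <- mult_INR; f_equal.
    unfold ramp_scale; destruct (Sel []); lia. }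
  assert (Hscale : 0 < INR ramp_scale)
    by (unfold ramp_scale; destruct (Sel []); simpl; lra).
  unfold ramp_process, ratR; rewrite Hden, ramp_nil.
  unfold ramp, weight; rewrite plus_INR, !mult_INR.
  destruct (Sel s); simpl; field; lra.
Qed.

Lemma ramp_process_F_C : recursive_selection Sel -> F_C ramp_process.
Proof.
  intro Hsel; split; [apply ramp_process_test|split].
  - intro s; unfold ramp_process; apply Rdiv_lt_0_compat; apply ramp_pos.
  - exists (fun s => 2 * code s + 3)%nat, (fun s => 2 * Nat.b2n (Sel s))%nat,
      (fun s => ramp_scale * code s + (ramp_scale - 1))%nat.
    repeat split; [| | |exact ramp_process_ratR].
    + exact (recursive_S_add (fun s => 2 * code s)%nat (fun _ => 3%nat)
               (recursive_S_mull 2 code recursive_S_code) (recursive_S_const 3)).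
    + exact (recursive_S_mull 2 _ Hsel).
    + exact (recursive_S_add (fun s => ramp_scale * code s)%nat
               (fun _ => ramp_scale - 1)%nat
               (recursive_S_mull ramp_scale code recursive_S_code) (recursive_S_const _)).
Qed.

Lemma ramp_process_selects r :
  temporal Sel -> 0 <= r <= 1 -> Sel = S_rF r ramp_process.
Proof.
  intros Htemp Hr; pose proof (ramp_pos []).
  apply temporal_eq_S_rF; auto; intros s x Hs; rewrite Delta_ramp_process.
  - apply Rdiv_lt_0_compat; [apply Delta_ramp_pos|]; auto.
  - apply Rlt_le; unfold Rdiv; apply Rmult_neg_pos;
      [apply Delta_ramp_neg | apply Rinv_0_lt_compat]; auto.
Qed.

End RationalProcess.

Section MultiplicativeProcess.

Fixpoint rev_product (D : situation -> bool -> R) (l : list bool) : R :=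
  match l with [] => 1 | x :: l' => rev_product D l' * D (rev l') x end.

Definition generated_process (D : situation -> bool -> R) : real_process :=
  fun s => rev_product D (rev s).

Lemma generated_processP D : generated_by D (generated_process D).
Proof.
  split; [reflexivity|]; intros s x.
  unfold generated_process; rewrite rev_unit; simpl; now rewrite rev_involutive.
Qed.

Lemma generated_by_pos D F :
  (forall s x, 0 < D s x) -> generated_by D F -> forall s, 0 < F s.
Proof.
  intros HD [Hnil Hsnoc] s; induction s as [|s x IH] using rev_ind.
  - rewrite Hnil; lra.
  - rewrite Hsnoc; now apply Rmult_lt_0_compat.
Qed.

Lemma Delta_generated_by D F s x :
  generated_by D F -> Defs.Delta F s x = F s * (D s x - 1).
Proof. intros [_ Hsnoc]; unfold Defs.Delta; rewrite Hsnoc; ring. Qed.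

Variable Sel : selection_process.

Definition doubling (s : situation) (_ : bool) : R := INR (Nat.b2n (Sel s) + 1).

Lemma doubling_pos s x : 0 < doubling s x.
Proof.
  unfold doubling; rewrite plus_INR; pose proof (pos_INR (Nat.b2n (Sel s))).
  simpl; lra.
Qed.

Lemma doubling_sub1 s x : doubling s x - 1 = INR (Nat.b2n (Sel s)).
Proof. unfold doubling; rewrite plus_INR; simpl; ring. Qed.

Lemma doubling_process_F_wML :
  recursive_selection Sel -> F_wML (generated_process doubling).
Proof.
  intro Hsel; exists doubling; repeat split.
  - intros s x; apply Rlt_le, doubling_pos.
  - exact (recursive_lower_semicomputable_SB (fun s => Nat.b2n (Sel s) + 1)%nat
             (recursive_S_add _ _ Hsel (recursive_S_const 1))).
  - intros s x; apply generated_processP.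
Qed.

Lemma doubling_process_selects r :
  temporal Sel -> 0 <= r <= 1 -> Sel = S_rF r (generated_process doubling).
Proof.
  intros Htemp Hr.
  pose proof (generated_by_pos _ _ doubling_pos (generated_processP doubling)) as Hpos.
  apply temporal_eq_S_rF; auto; intros s x Hs;
    rewrite (Delta_generated_by _ _ s x (generated_processP doubling)),
      doubling_sub1, Hs; simpl; specialize (Hpos s); lra.
Qed.

End MultiplicativeProcess.

Theorem proposition28 (p q : R) (Rk : randomness) (Sel : selection_process) :
  0 <= p <= 1 -> 0 <= q <= 1 ->
  temporal Sel -> recursive_selection Sel ->
  S_pq p q (F_of Rk) Sel.
Proof.
  intros Hp _ Htemp Hsel.
  pose proof (ramp_process_F_C Sel Hsel) as HC.
  pose proof (ramp_process_selects Sel p Htemp Hp) as Hramp.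
  destruct Rk; cbn [F_of].
  - exists (ramp_process Sel), p; auto using F_C_F_ML.
  - exists (generated_process (doubling Sel)), p.
    auto using doubling_process_F_wML, doubling_process_selects.
  - exists (ramp_process Sel), p; auto.
  - exists (ramp_process Sel), p; auto.
Qed.
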